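(* Let $\mathbf{D}$ be a dagger kernel category. Then its dagger Karoubi envelope $\mathrm{Kar}_\dagger(\mathbf{D})$ is again a dagger kernel category. Explicitly, a zero object is $(0,\mathrm{id}_0)$, and for a morphism $f:(X,s)\to(Y,t)$ of $\mathrm{Kar}_\dagger(\mathbf{D})$, if $k:K\to X$ is the dagger kernel of $f$ in $\mathbf{D}$ and $s'=k^\dagger\circ s\circ k$ (the unique map with $k\circ s'=s\circ k$), then $s'$ is a self-adjoint idempotent on $K$ and $s\circ k:(K,s')\to(X,s)$ is a dagger kernel of $f$ in $\mathrm{Kar}_\dagger(\mathbf{D})$. Moreover the embedding $\mathcal{I}:\mathbf{D}\to\mathrm{Kar}_\dagger(\mathbf{D})$, $X\mapsto(X,\mathrm{id}_X)$, $f\mapsto f$, preserves the dagger, the zero object and kernels.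
   Context: A dagger category is a category $\mathbf{D}$ with a contravariant functor $\dagger$ that is the identity on objects and satisfies $f^{\dagger\dagger}=f$. A dagger mono is a morphism $k$ with $k^\dagger\circ k=\mathrm{id}$. A dagger kernel category is a dagger category with a zero object $0$ (yielding zero morphisms $X\to 0\to Y$) in which every morphism has a kernel that is a dagger mono. A self-adjoint idempotent is an endomorphism $s$ with $s^\dagger=s=s\circ s$. The dagger Karoubi envelope $\mathrm{Kar}_\dagger(\mathbf{D})$ has as objects pairs $(X,s)$ with $s$ a self-adjoint idempotent on $X$; a morphism $(X,s)\to(Y,t)$ is a morphism $f:X\to Y$ of $\mathbf{D}$ with $f\circ s=f=t\circ f$; composition is as in $\mathbf{D}$, the identity on $(X,s)$ is $s$, and the dagger is that of $\mathbf{D}$. *)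

From Stdlib Require Import ProofIrrelevance.

Set Implicit Arguments.

Record DagCat := {
  Ob : Type;
  Hom : Ob -> Ob -> Type;
  comp : forall X Y Z : Ob, Hom Y Z -> Hom X Y -> Hom X Z;
  idm : forall X : Ob, Hom X X;
  dag : forall X Y : Ob, Hom X Y -> Hom Y X;
  comp_assoc : forall X Y Z W (h : Hom Z W) (g : Hom Y Z) (f : Hom X Y),
      comp h (comp g f) = comp (comp h g) f;
  comp_id_l : forall X Y (f : Hom X Y), comp (idm Y) f = f;
  comp_id_r : forall X Y (f : Hom X Y), comp f (idm X) = f;
  dag_id : forall X, dag (idm X) = idm X;
  dag_comp : forall X Y Z (g : Hom Y Z) (f : Hom X Y),
      dag (comp g f) = comp (dag f) (dag g);
  dag_invol : forall X Y (f : Hom X Y), dag (dag f) = f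
}.

Arguments Hom {d} _ _.
Arguments comp {d X Y Z} _ _.
Arguments idm {d} _.
Arguments dag {d X Y} _.

Definition is_zero (D : DagCat) (Z : Ob D) : Prop :=
  (forall X : Ob D, exists f : Hom X Z, forall g : Hom X Z, g = f) /\
  (forall X : Ob D, exists f : Hom Z X, forall g : Hom Z X, g = f).

(** Zero morphisms: those factoring through a zero object
    (in a category with a zero object these are exactly X -> 0 -> Y). *)
Definition is_zero_mor (D : DagCat) {X Y : Ob D} (f : Hom X Y) : Prop :=
  exists (Z : Ob D) (a : Hom X Z) (b : Hom Z Y), is_zero D Z /\ f = comp b a.

Definition is_kernel (D : DagCat) {X Y K : Ob D} (f : Hom X Y) (k : Hom K X) : Prop :=
  is_zero_mor D (comp f k) /\
  forall (W : Ob D) (g : Hom W X), is_zero_mor D (comp f g) ->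
    exists h : Hom W K, comp k h = g /\ forall h' : Hom W K, comp k h' = g -> h' = h.

Definition dagger_mono (D : DagCat) {K X : Ob D} (k : Hom K X) : Prop :=
  comp (dag k) k = idm K.

Definition dagger_kernel_cat (D : DagCat) : Prop :=
  (exists Z : Ob D, is_zero D Z) /\
  forall (X Y : Ob D) (f : Hom X Y),
    exists (K : Ob D) (k : Hom K X), is_kernel D f k /\ dagger_mono D k.

Definition sa_idem (D : DagCat) {X : Ob D} (s : Hom X X) : Prop :=
  dag s = s /\ comp s s = s.

Definition KOb (D : DagCat) := {X : Ob D & {s : Hom X X | sa_idem D s}}.
Definition kcar (D : DagCat) (A : KOb D) : Ob D := projT1 A.
Definition kidem (D : DagCat) (A : KOb D) : Hom (kcar A) (kcar A) :=
  proj1_sig (projT2 A).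
Definition KarObj (D : DagCat) {X : Ob D} (s : Hom X X) (Hs : sa_idem D s) : KOb D :=
  existT _ X (exist _ s Hs).

Definition KHom (D : DagCat) (A B : KOb D) :=
  {f : Hom (kcar A) (kcar B) | comp f (kidem A) = f /\ comp (kidem B) f = f}.
Definition kval (D : DagCat) (A B : KOb D) (f : KHom A B) : Hom (kcar A) (kcar B) :=
  proj1_sig f.

Lemma kidem_sa (D : DagCat) (A : KOb D) : sa_idem D (kidem A).
Proof. exact (proj2_sig (projT2 A)). Qed.

Lemma khom_eq (D : DagCat) (A B : KOb D) (f g : KHom A B) :
  kval f = kval g -> f = g.
Proof.
  destruct f as [f Hf], g as [g Hg]; simpl; intros ->.
  f_equal; apply proof_irrelevance.
Qed.

Definition kcomp (D : DagCat) (A B C : KOb D) (g : KHom B C) (f : KHom A B) : KHom A C.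
Proof.
  refine (exist _ (comp (kval g) (kval f)) _).
  destruct g as [g [Hg1 Hg2]], f as [f [Hf1 Hf2]]; simpl; split.
  - rewrite <- comp_assoc, Hf1; reflexivity.
  - rewrite comp_assoc, Hg2; reflexivity.
Defined.

Definition kid (D : DagCat) (A : KOb D) : KHom A A.
Proof.
  refine (exist _ (kidem A) _).
  destruct (kidem_sa A) as [_ H]; split; exact H.
Defined.

Definition kdag (D : DagCat) (A B : KOb D) (f : KHom A B) : KHom B A.
Proof.
  refine (exist _ (dag (kval f)) _).
  destruct f as [f [Hf1 Hf2]]; simpl.
  destruct (kidem_sa A) as [HA _]; destruct (kidem_sa B) as [HB _].
  split.
  - rewrite <- HB. rewrite <- dag_comp, Hf2; reflexivity.
  - rewrite <- HA. rewrite <- dag_comp, Hf1; reflexivity.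
Defined.

Definition Kar (D : DagCat) : DagCat.
Proof.
  refine (@Build_DagCat (KOb D) (@KHom D) (@kcomp D) (@kid D) (@kdag D)
            _ _ _ _ _ _); intros; apply khom_eq; simpl.
  - apply comp_assoc.
  - destruct f as [f [H1 H2]]; exact H2.
  - destruct f as [f [H1 H2]]; exact H1.
  - destruct (kidem_sa X) as [H _]; exact H.
  - apply dag_comp.
  - apply dag_invol.
Defined.

Lemma idm_sa {D : DagCat} (X : Ob D) : sa_idem D (idm X).
Proof. split; [apply dag_id | apply comp_id_l]. Qed.

Definition KarI {D : DagCat} (X : Ob D) : Ob (Kar D) := KarObj (idm_sa X).

Definition KarI_mor {D : DagCat} {X Y : Ob D} (f : Hom X Y) :
  @Hom (Kar D) (KarI X) (KarI Y).
Proof.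
  refine (exist _ f _); simpl; split; [apply comp_id_r | apply comp_id_l].
Defined.

(* A morphism of Kar(D) is a morphism of D, so everything is
   reduced to D by three observations:
   - zero morphisms of Kar(D) are exactly the Kar-morphisms that are zero in D
     (an object (Z, id) with Z a zero object of D is a zero object of Kar(D),
     and all zero objects of Kar(D) are isomorphic to it);
   - if k : K -> X is a dagger mono and an idempotent s on X restricts along k
     (s k = k h for some h), then h is forced to be s' := k^dag s k, and s' is
     a self-adjoint idempotent when s is;
   - if k is a kernel in D of (the underlying map of) f : (X,s) -> (Y,t) and t'
     is an idempotent on K with k t' = s k, then k t' : (K,t') -> (X,s) is a
     kernel of f in Kar(D).
   The explicit kernels of the theorem instantiate the last fact with t' = s';
   kernels of embedded morphisms instantiate it with t' = id. *)


Section KaroubiKernels.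

Variable D : DagCat.

Lemma kval_idem_r {A B : KOb D} (f : KHom A B) : comp (kval f) (kidem A) = kval f.
Proof. exact (proj1 (proj2_sig f)). Qed.

Lemma kval_idem_l {A B : KOb D} (f : KHom A B) : comp (kidem B) (kval f) = kval f.
Proof. exact (proj2 (proj2_sig f)). Qed.

Lemma dagger_mono_factor {K X W : Ob D} (k : Hom K X) (h : Hom W K) (g : Hom W X) :
  dagger_mono D k -> comp k h = g -> h = comp (dag k) g.
Proof.
  intros Hk <-. rewrite comp_assoc, Hk. symmetry; apply comp_id_l.
Qed.

Lemma zero_mor_precomp {W X Y : Ob D} (f : Hom X Y) (g : Hom W X) :
  is_zero_mor D f -> is_zero_mor D (comp f g).
Proof.
  intros [Z [a [b [HZ ->]]]].
  exists Z, (comp a g), b; split; [exact HZ | symmetry; apply comp_assoc].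
Qed.

(** (Z, id_Z) is a zero object of Kar(D) whenever Z is one of D: the unique
    D-maps into and out of Z are automatically Kar-morphisms. *)
Lemma KarI_zero (Z : Ob D) : is_zero D Z -> is_zero (Kar D) (KarI Z).
Proof.
  intros [Hterm Hinit]; split; intros A.
  - destruct (Hterm (kcar A)) as [z Hz].
    assert (Hm : comp z (kidem A) = z /\ comp (idm Z) z = z)
      by (split; [apply Hz | apply comp_id_l]).
    exists (exist _ z Hm : KHom A (KarI Z)); intros g; apply khom_eq, Hz.
  - destruct (Hinit (kcar A)) as [z Hz].
    assert (Hm : comp z (idm Z) = z /\ comp (kidem A) z = z)
      by (split; [apply comp_id_r | apply Hz]).
    exists (exist _ z Hm : KHom (KarI Z) A); intros g; apply khom_eq, Hz.
Qed.

(** A Kar-morphism that is zero in D is zero in Kar(D): if f = b a through a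
    zero object Z of D, then f = (t b) (a s) through (Z, id_Z). *)
Lemma Kar_zero_mor_of_zero_mor (A B : KOb D) (f : KHom A B) :
  is_zero_mor D (kval f) -> is_zero_mor (Kar D) f.
Proof.
  intros [Z [a [b [HZ Hf]]]].
  destruct (kidem_sa A) as [_ HsA], (kidem_sa B) as [_ HsB].
  assert (Ha : comp (comp a (kidem A)) (kidem A) = comp a (kidem A) /\
               comp (idm Z) (comp a (kidem A)) = comp a (kidem A)).
  { split; [rewrite <- comp_assoc, HsA; reflexivity | apply comp_id_l]. }
  assert (Hb : comp (comp (kidem B) b) (idm Z) = comp (kidem B) b /\
               comp (kidem B) (comp (kidem B) b) = comp (kidem B) b).
  { split; [apply comp_id_r | rewrite comp_assoc, HsB; reflexivity]. }
  exists (KarI Z), (exist _ _ Ha : KHom A (KarI Z)), (exist _ _ Hb : KHom (KarI Z) B).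
  split; [apply KarI_zero, HZ |].
  apply khom_eq; simpl.
  rewrite <- comp_assoc, (comp_assoc _ _ _ _ _ b a), <- Hf,
    kval_idem_r, kval_idem_l; reflexivity.
Qed.

(** Conversely, when D has a zero object Z0, a zero morphism of Kar(D)
    through some zero object Z' also factors through (Z0, id), of which Z' is
    a retract; hence it factors through Z0 in D. *)
Lemma zero_mor_of_Kar_zero_mor (HZ : exists Z, is_zero D Z) (A B : KOb D)
  (f : KHom A B) : is_zero_mor (Kar D) f -> is_zero_mor D (kval f).
Proof.
  intros [Z' [a [b [[Hterm Hinit] Hf]]]].
  destruct HZ as [Z0 HZ0].
  destruct (Hterm (KarI Z0)) as [v _], (Hinit (KarI Z0)) as [u _].
  destruct (Hterm Z') as [e He].
  assert (Hretract : @comp (Kar D) _ _ _ v u = idm Z')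
    by (rewrite (He (comp v u)), (He (idm Z')); reflexivity).
  exists Z0, (kval (@comp (Kar D) _ _ _ u a)), (kval (@comp (Kar D) _ _ _ b v)).
  split; [exact HZ0 |].
  assert (Hfactor : f = @comp (Kar D) _ _ _ (@comp (Kar D) _ _ _ b v)
                                          (@comp (Kar D) _ _ _ u a)).
  { rewrite Hf, <- comp_assoc, (comp_assoc _ _ _ _ _ v u), Hretract, comp_id_l.
    reflexivity. }
  rewrite Hfactor; reflexivity.
Qed.

Definition restr_idem {K X : Ob D} (k : Hom K X) (s : Hom X X) : Hom K K :=
  comp (dag k) (comp s k).

Section Restriction.

Context {K X : Ob D} {k : Hom K X} {s : Hom X X}.
Hypothesis Hk : dagger_mono D k.

Lemma restr_idem_comm :
  (exists h, comp k h = comp s k) -> comp k (restr_idem k s) = comp s k.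
Proof.
  intros [h Hh]. unfold restr_idem.
  rewrite <- (dagger_mono_factor k h _ Hk Hh). exact Hh.
Qed.

Lemma restr_idem_unique (u : Hom K K) : comp k u = comp s k -> u = restr_idem k s.
Proof. exact (dagger_mono_factor k u _ Hk). Qed.

Lemma restr_idem_sa :
  sa_idem D s -> comp k (restr_idem k s) = comp s k -> sa_idem D (restr_idem k s).
Proof.
  intros [Hdag Hidem] Hcomm. unfold restr_idem in *; split.
  - rewrite !dag_comp, dag_invol, Hdag, comp_assoc; reflexivity.
  - rewrite <- !comp_assoc, Hcomm, (comp_assoc _ _ _ _ _ s s k), Hidem; reflexivity.
Qed.

End Restriction.

(** For s' = k^dag s k, the map s k : (K, s') -> (X, s) is a dagger mono of
    Kar(D): (s k)^dag (s k) = k^dag s s k = s', the identity of (K, s'). *)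
Lemma Kar_dagger_mono_restr (A : KOb D) (K : Ob D) (k : Hom K (kcar A))
  (Hs : sa_idem D (restr_idem k (kidem A))) (m : KHom (KarObj Hs) A) :
  kval m = comp (kidem A) k -> dagger_mono (Kar D) m.
Proof.
  intros Hm. destruct (kidem_sa A) as [Hdag Hidem].
  apply khom_eq.
  change (comp (dag (kval m)) (kval m) = restr_idem k (kidem A)).
  rewrite Hm, dag_comp, Hdag, <- comp_assoc,
    (comp_assoc _ _ _ _ _ _ _ k), Hidem; reflexivity.
Qed.

Section KarKernel.

Hypothesis HZ : exists Z, is_zero D Z.

(** The
    mediating map for g is (kidem T) h, where h is the D-mediating map. *)
Lemma Kar_kernel {A B T : KOb D} {f : KHom A B} {k : Hom (kcar T) (kcar A)}
  {m : KHom T A} :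
  is_kernel D (kval f) k -> comp k (kidem T) = comp (kidem A) k ->
  kval m = comp k (kidem T) -> is_kernel (Kar D) f m.
Proof.
  intros [Hzero Huniv] Hcomm Hm.
  destruct (kidem_sa T) as [_ HtT].
  split.
  - apply Kar_zero_mor_of_zero_mor.
    change (is_zero_mor D (comp (kval f) (kval m))).
    rewrite Hm, comp_assoc; apply zero_mor_precomp, Hzero.
  - intros W g Hg.
    apply (zero_mor_of_Kar_zero_mor HZ) in Hg.
    destruct (Huniv (kcar W) (kval g) Hg) as [h [Hh Hh_unique]].
    (* h already absorbs the idempotent of W, since k (h w) = g w = g. *)
    assert (Hhw : comp h (kidem W) = h).
    { apply Hh_unique. rewrite comp_assoc, Hh. apply kval_idem_r. }
    assert (Hmed : comp (comp (kidem T) h) (kidem W) = comp (kidem T) h /\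
                   comp (kidem T) (comp (kidem T) h) = comp (kidem T) h).
    { split; [rewrite <- comp_assoc, Hhw | rewrite comp_assoc, HtT]; reflexivity. }
    exists (exist _ _ Hmed : KHom W T); split.
    + (* m (t h) = k t h = s k h = s g = g *)
      apply khom_eq; simpl.
      rewrite Hm, <- comp_assoc, (comp_assoc _ _ _ _ _ (kidem T) (kidem T) h), HtT,
        comp_assoc, Hcomm, <- comp_assoc, Hh; apply kval_idem_l.
    + (* a mediating h' satisfies h' = t h' and k h' = k t h' = g, so h' = t h *)
      intros h' Hh'. apply khom_eq; simpl.
      apply (f_equal (@kval D _ _)) in Hh'; simpl in Hh'.
      rewrite <- (kval_idem_l h'). f_equal.
      apply Hh_unique.
      rewrite <- Hh', Hm, <- comp_assoc, kval_idem_l; reflexivity.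
Qed.

Lemma Kar_explicit_dagger_kernel (A B : KOb D) (f : KHom A B) (K : Ob D)
  (k : Hom K (kcar A)) :
  is_kernel D (kval f) k -> dagger_mono D k ->
  let s := kidem A in
  let s' := restr_idem k s in
  (comp k s' = comp s k /\ forall u : Hom K K, comp k u = comp s k -> u = s') /\
  exists Hs : sa_idem D s',
  exists Hm : comp (comp s k) s' = comp s k /\ comp s (comp s k) = comp s k,
    is_kernel (Kar D) f (exist _ (comp s k) Hm : KHom (KarObj Hs) A) /\
    dagger_mono (Kar D) (exist _ (comp s k) Hm : KHom (KarObj Hs) A).
Proof.
  intros Hker Hdm; cbv zeta.
  pose proof (kval_idem_r f) as Hfs.
  destruct (kidem_sa A) as [_ Hidem].
  set (s := kidem A) in *; set (s' := restr_idem k s).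
  (* s k factors through k because f (s k) = f k is zero. *)
  assert (Hfac : exists h, comp k h = comp s k).
  { destruct ((proj2 Hker) _ (comp s k)) as [h [Hh _]].
    - rewrite comp_assoc, Hfs; exact (proj1 Hker).
    - exists h; exact Hh. }
  assert (Hcomm : comp k s' = comp s k) by exact (restr_idem_comm Hdm Hfac).
  split; [split; [exact Hcomm | intros u; apply (restr_idem_unique Hdm)] |].
  pose proof (restr_idem_sa (kidem_sa A) Hcomm) as Hs; exists Hs.
  assert (Hm : comp (comp s k) s' = comp s k /\ comp s (comp s k) = comp s k).
  { split; [rewrite <- comp_assoc, Hcomm | ]; rewrite comp_assoc, Hidem; reflexivity. }
  exists Hm; split.
  - apply (Kar_kernel (T := KarObj Hs) Hker); [exact Hcomm | symmetry; exact Hcomm].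
  - apply Kar_dagger_mono_restr; reflexivity.
Qed.

End KarKernel.

End KaroubiKernels.

Theorem mainTheorem1 (D : DagCat) (HD : dagger_kernel_cat D) :
  (* Kar_dagger(D) is a dagger kernel category *)
  dagger_kernel_cat (Kar D)
  (* (0, id_0) is a zero object *)
  /\ (forall Z : Ob D, is_zero D Z -> is_zero (Kar D) (KarI Z))
  (* explicit dagger kernels *)
  /\ (forall (A B : KOb D) (f : KHom A B) (K : Ob D) (k : Hom K (kcar A)),
        is_kernel D (kval f) k -> dagger_mono D k ->
        let s := kidem A in
        let s' := comp (dag k) (comp s k) in
        (comp k s' = comp s k /\
         forall u : Hom K K, comp k u = comp s k -> u = s') /\
        exists Hs : sa_idem D s',
        exists Hm : comp (comp s k) s' = comp s k /\ comp s (comp s k) = comp s k,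
          is_kernel (Kar D) f (exist _ (comp s k) Hm : KHom (KarObj Hs) A) /\
          dagger_mono (Kar D) (exist _ (comp s k) Hm : KHom (KarObj Hs) A))
  (* the embedding I is a functor preserving dagger, zero object and kernels *)
  /\ (forall X : Ob D, KarI_mor (idm X) = idm (KarI X))
  /\ (forall (X Y Z : Ob D) (g : Hom Y Z) (f : Hom X Y),
        KarI_mor (comp g f) = comp (KarI_mor g) (KarI_mor f))
  /\ (forall (X Y : Ob D) (f : Hom X Y), dag (KarI_mor f) = KarI_mor (dag f))
  /\ (forall (X Y K : Ob D) (f : Hom X Y) (k : Hom K X),
        is_kernel D f k -> is_kernel (Kar D) (KarI_mor f) (KarI_mor k)).
Proof.
  destruct HD as [[Z0 HZ0] Hkernels].
  assert (HZ : exists Z, is_zero D Z) by (exists Z0; exact HZ0).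
  refine (conj _ (conj (KarI_zero D) (conj (Kar_explicit_dagger_kernel D HZ) _))).
  -
    split; [exists (KarI Z0); exact (KarI_zero D Z0 HZ0) |].
    intros A B f.
    destruct (Hkernels _ _ (kval f)) as [K [k [Hker Hdm]]].
    destruct (Kar_explicit_dagger_kernel D HZ _ _ f _ _ Hker Hdm) as [_ [Hs [Hm Hdk]]].
    eexists; eexists; exact Hdk.
  - (* the embedding is the identity on underlying maps *)
    split; [intros; apply khom_eq; reflexivity |].
    split; [intros; apply khom_eq; reflexivity |].
    split; [intros; apply khom_eq; reflexivity |].
    intros X Y K f k Hker.
    apply (Kar_kernel D HZ (A := KarI X) (B := KarI Y) (T := KarI K)
             (f := KarI_mor f) Hker); simpl.
    + rewrite comp_id_l; apply comp_id_r.
    + symmetry; apply comp_id_r.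
Qed.
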